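(* Let $n\geqslant 2$, $\lambda>0$, let $p_1,\ldots,p_M\in\mathbb{Z}^n$ be distinct points and $n_1,\ldots,n_M$ positive integers, and write $g=4\pi\sum_{j=1}^M n_j\delta_{p_j}$. Let $u$ be the maximal topological solution of the Chern–Simons equation $$\Delta u=\lambda e^u(e^u-1)+g\ \text{ on }\mathbb{Z}^n,\qquad \lim_{d(x)\to+\infty}u(x)=0$$ (i.e. the solution $u$ of this problem with $f\leqslant u$ for every other solution $f$ of this problem; such $u$ exists). Then the Abelian Higgs equation $$\Delta u'=\lambda(e^{u'}-1)+g\ \text{ on }\mathbb{Z}^n,\qquad \lim_{d(x)\to+\infty}u'(x)=0$$ has a unique solution $u'$, this solution satisfies $u'\in l^p(\mathbb{Z}^n)$ for every $1\leqslant p\leqslant\infty$ and $u\leqslant u'\leqslant 0$ on $\mathbb{Z}^n$, and, with $m=\ln(1+\frac{\lambda}{2n})$, for every $0<\epsilon<1$ one has $u'(x)=O(e^{-m(1-\epsilon)d(x)})$ as $d(x)\to+\infty$.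
   Context: $\mathbb{Z}^n$ is the integer lattice graph: vertices are the points of $\mathbb{Z}^n$, and $x\sim y$ iff $\sum_{i=1}^n|x_i-y_i|=1$. The distance is $d(x,y)=\sum_{i=1}^n|x_i-y_i|$ and $d(x)=d(x,0)$. The Laplacian is $\Delta u(x)=\sum_{y\sim x}(u(y)-u(x))$. $\delta_p$ denotes the function on $\mathbb{Z}^n$ equal to $1$ at $p$ and $0$ elsewhere. $l^p(\mathbb{Z}^n)$ denotes the usual sequence spaces on $\mathbb{Z}^n$. *)

From HB Require Import structures.
From mathcomp Require Import all_boot all_order all_algebra.
From mathcomp Require Import all_classical all_reals all_analysis.
Set Implicit Arguments. Unset Strict Implicit. Unset Printing Implicit Defensive.
Import Order.TTheory GRing.Theory Num.Theory.
Local Open Scope ring_scope.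

Definition pt (n : nat) := {ffun 'I_n -> int}.

Definition shift n (x : pt n) (i : 'I_n) (s : int) : pt n :=
  [ffun j => x j + (if j == i then s else 0)].

Definition dist0 n (x : pt n) : nat := \sum_(i < n) `|x i|%N.

Definition lap (R : realType) n (u : pt n -> R) (x : pt n) : R :=
  \sum_(i < n) ((u (shift x i 1) - u x) + (u (shift x i (-1)) - u x)).

Definition delta (R : realType) n (p : pt n) (x : pt n) : R :=
  if x == p then 1 else 0.

Definition gsrc (R : realType) n M (p : 'I_M -> pt n) (m : 'I_M -> nat)
  (x : pt n) : R :=
  4 * pi * \sum_(j < M) ((m j)%:R * delta R (p j) x).

Definition vanish_at_infty (R : realType) n (u : pt n -> R) : Prop :=
  forall e : R, 0 < e -> exists N : nat,
    forall x : pt n, (N <= dist0 x)%N -> `|u x| < e.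

Definition CS_sol (R : realType) n (lam : R) (g : pt n -> R) (u : pt n -> R) :=
  (forall x, lap u x = lam * expR (u x) * (expR (u x) - 1) + g x)
  /\ vanish_at_infty u.

Definition CS_max_sol (R : realType) n (lam : R) (g : pt n -> R) (u : pt n -> R) :=
  CS_sol lam g u /\ (forall f, CS_sol lam g f -> forall x, f x <= u x).

Definition AH_sol (R : realType) n (lam : R) (g : pt n -> R) (u : pt n -> R) :=
  (forall x, lap u x = lam * (expR (u x) - 1) + g x)
  /\ vanish_at_infty u.

Definition in_lp (R : realType) n (p : R) (u : pt n -> R) : Prop :=
  (\esum_(x in [set: pt n]) ((`|u x| `^ p)%:E) < +oo)%E.

Definition in_linf (R : realType) n (u : pt n -> R) : Prop :=
  exists C : R, forall x, `|u x| <= C.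

Definition bigO_exp_decay (R : realType) n (a : R) (u : pt n -> R) : Prop :=
  exists C : R, exists N : nat, forall x : pt n, (N <= dist0 x)%N ->
    `|u x| <= C * expR (- a * (dist0 x)%:R).

(* Everything rests on a maximum principle on Z^n: a function vanishing at
   infinity whose Laplacian is positive wherever the function is positive is
   nonpositive.  Applied to u it gives u <= 0, and applied to differences of
   solutions it gives uniqueness.  Since e^u (e^u - 1) >= e^u - 1, the
   Chern-Simons solution u is a subsolution of the Abelian Higgs equation, so
   the monotone iteration w |-> (sum of the neighbours of w - g
   - lam (e^w - 1) + lam w) / (2n + lam) started at u increases to a solution
   u' with u <= u' <= 0.  Far from the vortices lap u' <= (lam/2) u', while
   lap e^(-a d) <= n (e^a - 1) e^(-a d) <= (lam/2) e^(-a d) as soon as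
   a <= ln (1 + lam/(2n)); the maximum principle applied to
   -(u' + C e^(-a d)) then gives |u'| <= C e^(-a d), and summing e^(-a q d(x))
   over Z^n, a product of geometric series, puts u' in every l^q. *)

From Pilot Require Import Defs.
From HB Require Import structures.
From mathcomp Require Import all_boot all_order all_algebra.
From mathcomp Require Import all_classical all_reals all_analysis.
From mathcomp Require Import zify ring lra.
Import Order.TTheory GRing.Theory Num.Theory.
Import numFieldNormedType.Exports.
Local Open Scope ring_scope.
Set Implicit Arguments. Unset Strict Implicit. Unset Printing Implicit Defensive.

Section Ball.
Variable n : nat.

Lemma normz_le_dist0 (x : pt n) i : (`|x i| <= dist0 x)%N.
Proof. by rewrite /dist0 (bigD1 i) //= leq_addr. Qed.

(* A coordinate [(k, true)] stands for [k] and [(k, false)] for [-(k + 1)],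
   so the points of the ball of radius [L] form the image of a finite type. *)
Definition box_pt L (t : {ffun 'I_n -> 'I_L.+1 * bool}) : pt n :=
  [ffun i => if (t i).2 then ((t i).1 : nat)%:Z else - (((t i).1 : nat)%:Z + 1)].

Definition box_idx L (x : pt n) : {ffun 'I_n -> 'I_L.+1 * bool} :=
  [ffun i => (inord (if (0 <= x i)%R then absz (x i) else (absz (x i)).-1),
              (0 <= x i)%R)].

Lemma box_idxK L x : (dist0 x <= L)%N -> box_pt (box_idx L x) = x.
Proof.
move=> hx; apply/ffunP => i; rewrite /box_pt /box_idx !ffunE /=.
have := normz_le_dist0 x i; move: (x i) => z hz.
by case h0: (0 <= z)%R => /=; rewrite inordK; lia.
Qed.

Lemma box_pt_norm L (t : {ffun 'I_n -> 'I_L.+1 * bool}) i :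
  ((t i).1 <= `|box_pt t i|)%N.
Proof.
by rewrite /box_pt ffunE; case: (t i).2 => //; move: ((t i).1 : nat) => k; lia.
Qed.

End Ball.

Section Vanish.
Variables (R : realType) (n : nat).
Implicit Types f g : pt n -> R.

Lemma ball_max L f : exists x1, forall x, (dist0 x <= L)%N -> f x <= f x1.
Proof.
exists (box_pt [arg max_(t > box_idx L 0) f (box_pt t)]%O) => x /box_idxK <-.
by case: arg_maxP => // t _; apply.
Qed.

Lemma vanish_attains_max f x0 : vanish_at_infty f -> 0 < f x0 ->
  exists x1, forall x, f x <= f x1.
Proof.
move=> hf f0; have [L HL] := hf _ f0; have [x1 H1] := ball_max L f.
have x0L : (dist0 x0 <= L)%N.
  by rewrite leqNgt; apply/negP => /ltnW /HL; rewrite ger0_norm ?ltxx ?ltW.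
exists x1 => x; case: (leqP L (dist0 x)) => [/HL|/ltnW/H1//].
by have := H1 _ x0L; have := ler_norm (f x); lra.
Qed.

Lemma vanish_bounded f : vanish_at_infty f -> in_linf f.
Proof.
move=> hf; have [L HL] := hf 1 ltr01; have [x1 H1] := ball_max L (fun x => `|f x|).
exists (1 + `|f x1|) => x; have := normr_ge0 (f x1).
by case: (leqP L (dist0 x)) => [/HL|/ltnW/H1]; lra.
Qed.

Lemma vanish_le f g : (forall x, `|g x| <= `|f x|) -> vanish_at_infty f ->
  vanish_at_infty g.
Proof.
move=> hgf hf e e0; have [L HL] := hf _ e0.
by exists L => x /HL; apply: le_lt_trans.
Qed.

Lemma vanishN f : vanish_at_infty f -> vanish_at_infty (fun x => - f x).
Proof. by apply: vanish_le => x; rewrite normrN. Qed.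

Lemma vanishD f g : vanish_at_infty f -> vanish_at_infty g ->
  vanish_at_infty (fun x => f x + g x).
Proof.
move=> hf hg e e0; have e2 : 0 < e / 2 by rewrite divr_gt0.
have [L1 H1] := hf _ e2; have [L2 H2] := hg _ e2.
exists (maxn L1 L2) => x; rewrite geq_max => /andP[/H1 h1 /H2 h2].
by have := ler_normD (f x) (g x); lra.
Qed.

Lemma lap_le0_at_max f x : (forall y, f y <= f x) -> lap f x <= 0.
Proof.
move=> fx; apply: sumr_le0 => i _.
by have := fx (Defs.shift x i 1); have := fx (Defs.shift x i (-1)); lra.
Qed.

Lemma lapE f x : lap f x =
  \sum_(i < n) (f (Defs.shift x i 1) + f (Defs.shift x i (-1))) - 2 * n%:R * f x.
Proof.
have -> : 2 * n%:R * f x = \sum_(i < n) (2 * f x).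
  by rewrite sumr_const card_ord -mulr_natr; ring.
by rewrite /lap -sumrB; apply: eq_bigr => i _; ring.
Qed.

Lemma lapD f g x : lap (fun y => f y + g y) x = lap f x + lap g x.
Proof. by rewrite /lap -big_split; apply: eq_bigr => i _ /=; ring. Qed.

Lemma lapN f x : lap (fun y => - f y) x = - lap f x.
Proof. by rewrite /lap -sumrN; apply: eq_bigr => i _; ring. Qed.

Lemma lapZ k f x : lap (fun y => k * f y) x = k * lap f x.
Proof. by rewrite /lap mulr_sumr; apply: eq_bigr => i _; ring. Qed.

Lemma max_principle f : vanish_at_infty f ->
  (forall x, 0 < f x -> 0 < lap f x) -> forall x, f x <= 0.
Proof.
move=> hf hlap x0; rewrite leNgt; apply/negP => f0.
have [x1 H1] := vanish_attains_max hf f0.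
have := lap_le0_at_max H1; rewrite leNgt => /negP; apply; apply: hlap.
exact: lt_le_trans f0 (H1 x0).
Qed.

End Vanish.

Section Source.
Variables (R : realType) (n M : nat) (p : 'I_M -> pt n) (m : 'I_M -> nat).

Lemma gsrc_ge0 x : 0 <= gsrc R p m x.
Proof.
rewrite /gsrc mulr_ge0 ?mulr_ge0 ?pi_ge0 ?sumr_ge0 // => j _.
by rewrite mulr_ge0 // /delta; case: ifP.
Qed.

Lemma gsrc_eq0_far : exists L, forall x, (L <= dist0 x)%N -> gsrc R p m x = 0.
Proof.
exists (\max_(j < M) dist0 (p j)).+1 => x hx.
rewrite /gsrc big1 ?mulr0 // => j _; rewrite /delta.
case: eqP => [xj|]; last by rewrite mulr0.
by move: hx; rewrite xj ltnNge leq_bigmax.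
Qed.

End Source.

Section Comparison.
Variables (R : realType) (n : nat) (lam : R) (g : pt n -> R).
Hypothesis lam_gt0 : 0 < lam.
Hypothesis g_ge0 : forall x, 0 <= g x.

Lemma CS_sol_le0 u : CS_sol lam g u -> forall x, u x <= 0.
Proof.
case=> hu /max_principle; apply => x ux; rewrite hu.
by rewrite ltr_wpDr // !mulr_gt0 ?expR_gt0 // subr_gt0 expR_gt1.
Qed.

Lemma AH_sol_le v1 v2 : AH_sol lam g v1 -> AH_sol lam g v2 ->
  forall x, v1 x <= v2 x.
Proof.
move=> [h1 /vanishD hv1] [h2 /vanishN /hv1 /max_principle hv] x.
rewrite -subr_le0; apply: hv => y; rewrite subr_gt0 lapD lapN h1 h2 => v21.
have e21 : 0 < expR (v1 y) - expR (v2 y) by rewrite subr_gt0 ltr_expR.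
by have := mulr_gt0 lam_gt0 e21; lra.
Qed.

Lemma AH_sol_unique v1 v2 : AH_sol lam g v1 -> AH_sol lam g v2 -> v1 = v2.
Proof.
move=> h1 h2; apply/funext => x.
by apply/le_anti; rewrite !(AH_sol_le h1 h2, AH_sol_le h2 h1).
Qed.

End Comparison.

Lemma expRB_le (R : realType) (a b : R) : a <= b -> b <= 0 ->
  expR b - expR a <= b - a.
Proof.
move=> ab b0.
have eb : expR b <= 1 by rewrite -expR0 ler_expR.
have eab : expR (a - b) <= 1 by rewrite -expR0 ler_expR subr_le0.
have := expR_ge1Dx (a - b); have := expR_gt0 b.
have -> : expR a = expR b * expR (a - b) by rewrite -expRD addrC subrK.
have : 0 <= (1 - expR b) * (1 - expR (a - b)) by rewrite mulr_ge0 // subr_ge0.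
nra.
Qed.

Definition AH_subsol (R : realType) n (lam : R) (g u : pt n -> R) :=
  forall x, lam * (expR (u x) - 1) + g x <= lap u x.

Lemma CS_sol_AH_subsol (R : realType) n (lam : R) (g u : pt n -> R) :
  0 <= lam -> CS_sol lam g u -> AH_subsol lam g u.
Proof.
move=> lam0 [hu _] x; rewrite hu lerD2r.
have := mulr_ge0 lam0 (sqr_ge0 (expR (u x) - 1)); nra.
Qed.

Section MonotoneIteration.
Local Open Scope classical_set_scope.
Local Open Scope ring_scope.
Variables (R : realType) (n : nat) (lam : R) (g : pt n -> R).
Hypothesis lam_gt0 : 0 < lam.
Hypothesis g_ge0 : forall x, 0 <= g x.
Implicit Types v w : pt n -> R.

Let c := 2 * n%:R + lam.
Let c_gt0 : 0 < c. Proof. by rewrite ltr_wpDl // mulr_ge0. Qed.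

(* The equation solved for the value at [x]; adding [lam * w x] to both sides
   makes the step nondecreasing in [w] on [w <= 0]. *)
Definition AH_step w x :=
  (\sum_(i < n) (w (Defs.shift x i 1) + w (Defs.shift x i (-1))) - g x
     - lam * (expR (w x) - 1) + lam * w x) / c.

Lemma AH_step_le v w : (forall x, v x <= w x) -> (forall x, w x <= 0) ->
  forall x, AH_step v x <= AH_step w x.
Proof.
move=> vw w0 x; rewrite ler_pM2r ?invr_gt0 //.
have : \sum_(i < n) (v (Defs.shift x i 1) + v (Defs.shift x i (-1)))
   <= \sum_(i < n) (w (Defs.shift x i 1) + w (Defs.shift x i (-1))).
  by apply: ler_sum => i _; apply: lerD.
have : 0 <= lam * ((w x - v x) - (expR (w x) - expR (v x))).
  by apply: mulr_ge0; [exact: ltW | rewrite subr_ge0 expRB_le].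
lra.
Qed.

Lemma AH_step_le0 w : (forall x, w x <= 0) -> forall x, AH_step w x <= 0.
Proof.
move=> w0 x; apply: le_trans (AH_step_le w0 (fun=> lexx 0) x) _.
rewrite /AH_step pmulr_lle0 ?invr_gt0 // big1 ?expR0 => [|i _]; last by rewrite addr0.
by have := g_ge0 x; lra.
Qed.

Lemma AH_subsol_le_step v : AH_subsol lam g v -> forall x, v x <= AH_step v x.
Proof.
move=> hv x; rewrite /AH_step ler_pdivlMr //.
by have := hv x; rewrite lapE /c; lra.
Qed.

Lemma AH_step_fixed w : (forall x, AH_step w x = w x) ->
  forall x, lap w x = lam * (expR (w x) - 1) + g x.
Proof.
move=> hw x; have := hw x; rewrite /AH_step => /(congr1 ( *%R^~ c)).
by rewrite divfK ?lt0r_neq0 // lapE /c; lra.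
Qed.

Lemma AH_step_cvg (w_ : nat -> pt n -> R) w x :
  (forall y, w_ ^~ y @ \oo --> w y) ->
  (fun k => AH_step (w_ k) x) @ \oo --> AH_step w x.
Proof.
move=> hw; apply: cvgMr_tmp; apply: cvgD; last exact: cvgMl_tmp.
have cvg_exp : expR (w_ k x) @[k --> \oo] --> expR (w x).
  apply: (@continuous_cvg _ _ _ _ _ (w_ ^~ x) expR); last exact: hw.
  exact: continuous_expR.
apply: cvgB; last exact: cvgMl_tmp (cvgB cvg_exp (cvg_cst _)).
apply: cvgB (cvg_cst _); apply: cvg_big => [|i _]; first exact: add_continuous.
exact: cvgD.
Qed.

Variable u : pt n -> R.
Hypothesis u_sub : AH_subsol lam g u.
Hypothesis u_le0 : forall x, u x <= 0.

Let u_ k := iter k AH_step u.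

Lemma iter_AH_step_le0_incr k :
  (forall x, u_ k x <= 0) /\ (forall x, u_ k x <= u_ k.+1 x).
Proof.
elim: k => [|k [IH0 IH1]]; first by split; [exact: u_le0 | exact: AH_subsol_le_step].
have h0 : forall x, u_ k.+1 x <= 0 by exact: AH_step_le0.
by split=> // x; exact: AH_step_le.
Qed.

Lemma AH_sol_above : vanish_at_infty u ->
  exists2 w, AH_sol lam g w & forall x, u x <= w x <= 0.
Proof.
move=> u_van.
pose w x := sup (range (u_ ^~ x)).
have ub x : ubound (range (u_ ^~ x)) 0.
  by move=> _ [k _ <-]; exact: (iter_AH_step_le0_incr k).1.
have cvg_w x : u_ ^~ x @ \oo --> w x.
  apply: nondecreasing_cvgn; last by exists 0.
  by apply/nondecreasing_seqP => k; exact: (iter_AH_step_le0_incr k).2.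
have u_le_w x : u x <= w x.
  by apply: sup_upper_bound; [split; [exists (u x), 0%N | exists 0] | exists 0%N].
have w_le0 x : w x <= 0 by apply: ge_sup; [exists (u x), 0%N | exact: ub].
have fix_w x : AH_step w x = w x.
  have h1 := cvg_w x; rewrite -cvg_shiftS in h1.
  exact: cvg_unique _ (AH_step_cvg cvg_w) h1.
exists w => [|x]; last by rewrite u_le_w w_le0.
split; first exact: AH_step_fixed.
by apply: vanish_le u_van => x; rewrite !ler0_norm // lerN2.
Qed.

End MonotoneIteration.

Lemma dist0_shift n (x : pt n) i s :
  (dist0 (Defs.shift x i s) + absz (x i) = dist0 x + absz (x i + s)%R)%N.
Proof.
rewrite /dist0 (bigD1 i) // [in RHS](bigD1 i) //= ffunE eqxx.
rewrite (eq_bigr (fun j => absz (x j))) => [|j /negbTE ji]; last first.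
  by rewrite ffunE ji addr0.
by set S := (\sum_(j < n | j != i) _)%N; lia.
Qed.

Lemma dist0_shift_cases n (x : pt n) i :
  let d := dist0 x in
  let d1 := dist0 (Defs.shift x i 1) in let d2 := dist0 (Defs.shift x i (-1)) in
  [\/ d1 = d.+1 /\ d2.+1 = d, d1.+1 = d /\ d2 = d.+1 | d1 = d.+1 /\ d2 = d.+1].
Proof.
move=> d d1 d2; have := dist0_shift x i 1; have := dist0_shift x i (-1).
rewrite -/d -/d1 -/d2; move: (x i) => z h2 h1.
by case: (ltrgtP z 0) => hz; [apply: Or32 | apply: Or31 | apply: Or33]; lia.
Qed.

Section ExpWeight.
Variables (R : realType) (n : nat) (a : R).
Hypothesis a_gt0 : 0 < a.

Definition expd (x : pt n) : R := expR (- a * (dist0 x)%:R).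

Lemma lap_expd x : lap expd x <= n%:R * (expR a - 1) * expd x.
Proof.
have ea : 1 <= expR a by rewrite -expR0 ler_expR ltW.
have ena : expR (- a) <= 1 by rewrite -expR0 ler_expR oppr_le0 ltW.
have eaa : expR a * expR (- a) = 1 by rewrite -expRD subrr expR0.
have ex_gt0 := expR_gt0 (- a * (dist0 x)%:R).
have up y : dist0 y = (dist0 x).+1 -> expd y = expd x * expR (- a).
  by move=> dy; rewrite /expd dy -expRD -addn1 natrD; congr expR; ring.
have down y : (dist0 y).+1 = dist0 x -> expd y = expd x * expR a.
  by move=> dy; rewrite /expd -dy -expRD -addn1 natrD; congr expR; ring.
rewrite (_ : _ * expd x = \sum_(i < n) ((expR a - 1) * expd x)); last first.
  by rewrite sumr_const card_ord -mulr_natl; ring.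
apply: ler_sum => i _; rewrite /expd in up down *.
by case: (dist0_shift_cases x i) =>
  [[/up -> /down ->]|[/down -> /up ->]|[/up -> /up ->]]; nra.
Qed.

Lemma vanish_expd (C : R) : 0 < C -> vanish_at_infty (fun x => C * expd x).
Proof.
move=> C0 e e0; pose y := - ln (e / C) / a.
exists (Num.Def.trunc y).+1 => x dx.
have yd : y < (dist0 x)%:R by apply: lt_le_trans (truncnS_gt y) _; rewrite ler_nat.
have ex : expd x < e / C.
  rewrite /expd -[X in _ < X]lnK ?posrE ?divr_gt0 // ltr_expR.
  by move: yd; rewrite ltr_pdivrMr //; lra.
rewrite ger0_norm; last exact: mulr_ge0 (ltW C0) (ltW (expR_gt0 _)).
by rewrite mulrC -ltr_pdivlMr.
Qed.

End ExpWeight.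

Lemma expR_sub1_le_half (R : realType) (t : R) : - 1 / 2 <= t -> t <= 0 ->
  expR t - 1 <= t / 2.
Proof.
move=> t_ge t_le0.
have et : 1 / 2 <= expR t by have := expR_ge1Dx t; lra.
have := expR_ge1Dx (- t).
have -> : expR (- t) = (expR t)^-1 by rewrite expRN.
move=> ent; have et0 := expR_gt0 t.
have : expR t - 1 <= expR t * t.
  move: ent; rewrite -(ler_pM2l et0) mulrV ?unitfE ?gt_eqF //; lra.
nra.
Qed.

Section ExpDecay.
Variables (R : realType) (n : nat) (a lam : R) (g w : pt n -> R).
Hypothesis a_gt0 : 0 < a.
Hypothesis lam_gt0 : 0 < lam.
Hypothesis rate_small : n%:R * (expR a - 1) <= lam / 2.
Hypothesis g_eq0_far : exists L, forall x, (L <= dist0 x)%N -> g x = 0.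
Hypothesis w_sol : AH_sol lam g w.
Hypothesis w_le0 : forall x, w x <= 0.

Lemma AH_sol_lap_le_far : exists L, forall x, (L <= dist0 x)%N ->
  lap w x <= lam / 2 * w x.
Proof.
case: w_sol => hw /(_ (1 / 2)) [//|L1 HL1]; have [L0 HL0] := g_eq0_far.
exists (maxn L0 L1) => x; rewrite geq_max => /andP[/HL0 gx /HL1].
rewrite hw gx addr0 ler0_norm // => wx.
have /(expR_sub1_le_half)/(_ (w_le0 x)) : - 1 / 2 <= w x by lra.
by move=> /(ler_wpM2l (ltW lam_gt0)); rewrite mulrA mulrAC.
Qed.

Lemma AH_sol_exp_decay : exists2 C, 0 < C & forall x, `|w x| <= C * expd a x.
Proof.
have [L HL] := AH_sol_lap_le_far; have [B HB] := vanish_bounded w_sol.2.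
pose C := (`|B| + 1) * expR (a * L%:R).
have C0 : 0 < C by rewrite mulr_gt0 ?expR_gt0 // ltr_wpDl.
have near x : (dist0 x < L)%N -> - w x <= C * expd a x.
  move=> xL; have := HB x; rewrite ler0_norm // => wB.
  have -> : C * expd a x = (`|B| + 1) * expR (a * (L%:R - (dist0 x)%:R)).
    by rewrite /C /expd -mulrA -expRD; congr (_ * expR _); ring.
  have : 1 <= expR (a * (L%:R - (dist0 x)%:R)).
    rewrite -[X in X <= _]expR0 ler_expR; apply: mulr_ge0; first exact: ltW.
    by rewrite subr_ge0 ler_nat ltnW.
  by have := ler_norm B; have := normr_ge0 B; nra.
have F_le0 : forall x, - (w x + C * expd a x) <= 0.
  apply: max_principle.
    exact: vanishN (vanishD w_sol.2 (vanish_expd n a_gt0 C0)).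
  move=> x Fx; rewrite lapN lapD lapZ.
  case: (ltnP (dist0 x) L) => [/near wC|/HL lapw]; first lra.
  have lap_Cexpd : C * lap (expd a) x <= C * (lam / 2 * expd a x).
    apply: ler_wpM2l; first exact: ltW.
    apply: le_trans (lap_expd a_gt0 x) _.
    by apply: ler_wpM2r; first exact/ltW/expR_gt0.
  have lam2 : 0 < lam / 2 by rewrite divr_gt0.
  by have := mulr_gt0 lam2 Fx; lra.
by exists C => // x; rewrite ler0_norm //; have := F_le0 x; lra.
Qed.

End ExpDecay.

Lemma sum_geom_le (R : realType) (r : R) N : 0 <= r < 1 ->
  \sum_(k < N) r ^+ k <= (1 - r)^-1.
Proof.
case/andP=> r0 r1; rewrite -div1r ler_pdivlMr ?subr_gt0 //.
have := subrX1 r N; have := exprn_ge0 N r0.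
set S := \sum_(k < N) _; nra.
Qed.

Section Summability.
Variables (R : realType) (n : nat) (b : R).
Hypothesis b_gt0 : 0 < b.

Let r := expR (- b).
Let r_ge0 : 0 <= r. Proof. exact/ltW/expR_gt0. Qed.
Let r_lt1 : r < 1. Proof. by rewrite /r -expR0 ltr_expR oppr_lt0. Qed.

Lemma sum_box_expR_le L : \sum_(t : {ffun 'I_n -> 'I_L.+1 * bool})
   \prod_(i < n) expR (- b * ((t i).1 : nat)%:R) <= (2 / (1 - r)) ^+ n.
Proof.
rewrite -(bigA_distr_bigA (fun i (j : 'I_L.+1 * bool) => expR (- b * (j.1 : nat)%:R))).
rewrite -[X in _ <= _ ^+ X]card_ord -prodr_const; apply: ler_prod => i _.
rewrite sumr_ge0 => [|j _]; last exact/ltW/expR_gt0.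
rewrite -(pair_bigA _ (fun (k : 'I_L.+1) (s : bool) => expR (- b * (k : nat)%:R))) /=.
under eq_bigr do rewrite big_bool /= expRM_natr -/r.
have -> : \sum_(k < L.+1) (r ^+ k + r ^+ k) = 2 * \sum_(k < L.+1) r ^+ k.
  by rewrite mulr_sumr; apply: eq_bigr => k _; ring.
by rewrite ler_pM2l ?sum_geom_le ?r_ge0.
Qed.

(* A finite set of points lies in some ball, which [box_idx] maps injectively
   into a box. *)
Lemma sum_expd_le (s : seq (pt n)) : uniq s ->
  \sum_(x <- s) expd b x <= (2 / (1 - r)) ^+ n.
Proof.
move=> s_uniq; pose L := \max_(x <- s) dist0 x.
have sL x : x \in s -> (dist0 x <= L)%N by move=> xs; exact: leq_bigmax_seq.
have -> : \sum_(x <- s) expd b x = \sum_(x <- s) expd b (box_pt (box_idx L x)).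
  by apply: eq_big_seq => x /sL /box_idxK ->.
rewrite -(big_map (box_idx L) xpredT (fun t => expd b (box_pt t))).
rewrite big_uniq /=; last first.
  by rewrite map_inj_in_uniq // => x y /sL/box_idxK {2}<- /sL/box_idxK {2}<- ->.
apply: le_trans (sum_box_expR_le L).
rewrite [X in _ <= X](bigID [in map (box_idx L) s]) /=; apply: ler_wpDr.
  by apply: sumr_ge0 => t _; apply: prodr_ge0 => i _; exact/ltW/expR_gt0.
apply: ler_sum => t _; rewrite /expd -expR_sum ler_expR /dist0 natr_sum mulr_sumr.
apply: ler_sum => i _; rewrite !mulNr lerN2; apply: ler_wpM2l; first exact: ltW.
by rewrite ler_nat box_pt_norm.
Qed.

Lemma esum_expd_bounded (f : pt n -> R) (K : R) : (forall x, 0 <= f x) -> 0 <= K ->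
  (forall x, f x <= K * expd b x) ->
  (\esum_(x in [set: pt n]) (f x)%:E < +oo)%E.
Proof.
move=> f0 K0 fK; apply: (@le_lt_trans _ _ (K * (2 / (1 - r)) ^+ n)%:E); last exact: ltry.
apply: ge_ereal_sup => _ [X [finX _] <-].
rewrite fsumEFin // lee_fin fsbig_finite //.
apply: le_trans (_ : K * \sum_(x <- _) expd b x <= _).
  by rewrite mulr_sumr; apply: ler_sum => x _.
by rewrite ler_wpM2l // sum_expd_le // finmap.fset_uniq.
Qed.

End Summability.

Lemma exp_decay_in_lp (R : realType) n (a C : R) (w : pt n -> R) : 0 < a -> 0 <= C ->
  (forall x, `|w x| <= C * expd a x) -> forall q, 0 < q -> in_lp q w.
Proof.
move=> a0 C0 wC q q0; apply: (@esum_expd_bounded _ _ (a * q) _ _ (C `^ q)).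
- by rewrite mulr_gt0.
- by move=> x; exact: powR_ge0.
- exact: powR_ge0.
move=> x; have E0 := expR_gt0 (- a * (dist0 x)%:R).
have -> : C `^ q * expd (a * q) x = (C * expd a x) `^ q.
  rewrite powRM //; last exact: ltW.
  by rewrite /expd -expRM mulrAC !mulNr.
apply: ge0_ler_powR (wC x); rewrite ?nnegrE //; first exact: ltW.
exact: mulr_ge0 C0 (ltW E0).
Qed.

Lemma higgs_rate_le (R : realType) n (lam a : R) : (0 < n)%N -> 0 < lam ->
  a <= ln (1 + lam / (2 * n%:R)) -> n%:R * (expR a - 1) <= lam / 2.
Proof.
move=> n0 lam0 a_le; have n0R : (0 : R) < n%:R by rewrite ltr0n.
have t0 : 0 < lam / (2 * n%:R) by rewrite divr_gt0 // mulr_gt0.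
have : expR a <= 1 + lam / (2 * n%:R).
  by rewrite -[X in _ <= X]lnK ?posrE ?ler_expR //; lra.
have -> : lam / 2 = n%:R * (lam / (2 * n%:R)) by field; rewrite lt0r_neq0.
by move=> ea; rewrite ler_pM2l //; lra.
Qed.

Theorem theorem1p2 (R : realType) (n : nat) (lam : R) (M : nat)
  (p : 'I_M -> pt n) (m : 'I_M -> nat) (u : pt n -> R) :
  (2 <= n)%N -> 0 < lam -> injective p -> (forall j, (0 < m j)%N) ->
  CS_max_sol lam (gsrc R p m) u ->
  exists u' : pt n -> R,
    [/\ AH_sol lam (gsrc R p m) u',
        (forall v, AH_sol lam (gsrc R p m) v -> v = u'),
        (forall q : R, 1 <= q -> in_lp q u') /\ in_linf u',
        (forall x, u x <= u' x /\ u' x <= 0) &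
        (forall eps : R, 0 < eps < 1 ->
           bigO_exp_decay ((ln (1 + lam / (2 * n%:R))) * (1 - eps)) u')].
Proof.
move=> n2 lam0 _ _ [uCS _]; set g := gsrc R p m.
have g0 x : 0 <= g x by exact: gsrc_ge0.
have u_le0 := CS_sol_le0 lam0 g0 uCS.
have [w w_sol uw] := AH_sol_above lam0 g0 (CS_sol_AH_subsol (ltW lam0) uCS) u_le0 uCS.2.
have w_le0 x : w x <= 0 by have /andP[] := uw x.
set a := ln (1 + lam / (2 * n%:R)).
have a0 : 0 < a by rewrite ln_gt0 // ltrDl divr_gt0 // mulr_gt0 // ltr0n; lia.
have decay b : 0 < b -> b <= a -> exists2 C, 0 < C & forall x, `|w x| <= C * expd b x.
  move=> b0 ba; apply: AH_sol_exp_decay w_sol w_le0 => //; last exact: gsrc_eq0_far.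
  by apply: higgs_rate_le => //; lia.
exists w; split=> //.
- by move=> v v_sol; have := AH_sol_unique lam0 v_sol w_sol.
- split; last exact: vanish_bounded w_sol.2.
  have [C C0 wC] := decay a a0 (lexx a).
  by move=> q q1; apply: (exp_decay_in_lp a0 (ltW C0) wC); lra.
- by move=> x; have /andP[] := uw x.
move=> eps /andP[e0 e1].
have b0 : 0 < a * (1 - eps) by rewrite mulr_gt0 // subr_gt0.
have ba : a * (1 - eps) <= a by rewrite ger_pMr //; lra.
have [C _ wC] := decay _ b0 ba.
by exists C, 0%N => x _; exact: wC.
Qed.
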